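(* Let $n\in\mathbb N$ be such that $n+1$ is an Hadamard number. Then there exists a regular $n$-dimensional simplex $S\subset Q_n$ with the following properties: (1) $\mathrm{ver}(S)\subset \mathrm{ver}(Q_n)$; (2) $\xi_n=\xi(S)=\alpha(S)=n$; (3) $d_1(S)=\dots=d_n(S)=1$; (4) the simplex $nS$ is circumscribed around $Q_n$ in such a way that each $(n-1)$-dimensional face of $nS$ contains exactly one vertex of $Q_n$.
   Context: $Q_n=[0,1]^n$. An Hadamard matrix of order $m$ is an $m\times m$ matrix $H$ with entries $\pm1$ satisfying $H^{-1}=\frac1m H^T$; $m$ is an Hadamard number if such a matrix exists. For a convex body $\Omega\subset\mathbb R^n$ (compact convex set with nonempty interior) and $\sigma>0$, $\sigma\Omega$ denotes the image of $\Omega$ under the homothety with center at the center of gravity of $\Omega$ and ratio $\sigma$. For convex bodies $\Omega_1,\Omega_2$, $\xi(\Omega_1;\Omega_2)$ is the minimal $\sigma\ge1$ with $\Omega_1\subset\sigma\Omega_2$, and $\alpha(\Omega_1;\Omega_2)$ is the minimal $\sigma>0$ such that $\Omega_1$ is contained in a translate of $\sigma\Omega_2$. For a simplex $S$, $\xi(S):=\xi(Q_n;S)$, $\alpha(S):=\alpha(Q_n;S)$, and $\xi_n:=\min\{\xi(S): S\subset Q_n \text{ a nondegenerate } n\text{-dimensional simplex}\}$. The $i$th axial diameter $d_i(\Omega)$ is the maximal length of a segment contained in $\Omega$ and parallel to the $x_i$-axis. A simplex is circumscribed around a convex body $\Omega$ if $\Omega\subset S$ and each $(n-1)$-dimensional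 face of $S$ contains a point of $\Omega$. $\mathrm{ver}(\cdot)$ denotes the vertex set of a polytope. *)

From HB Require Import structures.
From mathcomp Require Import all_boot all_order all_algebra.
From mathcomp Require Import boolp classical_sets reals.
Set Implicit Arguments. Unset Strict Implicit. Unset Printing Implicit Defensive.
Import Order.TTheory GRing.Theory Num.Theory.
Local Open Scope ring_scope.
Local Open Scope classical_set_scope.

Section Defs.
Variable R : realType.
Variable n : nat.
Local Notation pt := 'rV[R]_n.

Definition cube : set pt := [set x | forall j, 0 <= x ord0 j <= 1].
Definition cube_vertex : set pt := [set x | forall j, x ord0 j = 0 \/ x ord0 j = 1].

Definition simplex := 'I_n.+1 -> pt.

Definition conv_hull (v : simplex) : set pt :=
  [set x | exists l : 'I_n.+1 -> R,
     (forall i, 0 <= l i) /\ \sum_i l i = 1 /\ x = \sum_i l i *: v i].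

Definition nondeg_simplex (v : simplex) : Prop :=
  forall l : 'I_n.+1 -> R, \sum_i l i = 0 -> \sum_i l i *: v i = 0 ->
    forall i, l i = 0.

Definition dist2 (x y : pt) : R := \sum_j (x ord0 j - y ord0 j) ^+ 2.

Definition regular_simplex (v : simplex) : Prop :=
  forall i j k l, i != j -> k != l -> dist2 (v i) (v j) = dist2 (v k) (v l).

Definition centroid (v : simplex) : pt := (n.+1)%:R^-1 *: \sum_i v i.

Definition homothety (v : simplex) (s : R) : set pt :=
  [set centroid v + s *: (x - centroid v) | x in conv_hull v].

Definition homothety_vertices (v : simplex) (s : R) : simplex :=
  fun i => centroid v + s *: (v i - centroid v).

Definition is_min (P : set R) (m : R) : Prop := P m /\ forall s, P s -> m <= s.
Definition is_max (P : set R) (m : R) : Prop := P m /\ forall s, P s -> s <= m.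

Definition xi_eq (v : simplex) (m : R) : Prop :=
  is_min [set s | 1 <= s /\ cube `<=` homothety v s] m.

Definition alpha_eq (v : simplex) (m : R) : Prop :=
  is_min [set s | 0 < s /\ exists t : pt, cube `<=` [set t + y | y in homothety v s]] m.

Definition xin_eq (m : R) : Prop :=
  is_min [set s | exists v : simplex,
            nondeg_simplex v /\ conv_hull v `<=` cube /\ xi_eq v s] m.

Definition unit_vec (i : 'I_n) : pt := delta_mx ord0 i.

Definition axial_segment (K : set pt) (i : 'I_n) (l : R) : Prop :=
  0 <= l /\ exists x : pt, forall t : R, 0 <= t <= 1 -> K (x + (t * l) *: unit_vec i).

Definition axial_diam_eq (K : set pt) (i : 'I_n) (d : R) : Prop :=
  is_max (axial_segment K i) d.

Definition facet (w : simplex) (k : 'I_n.+1) : set pt :=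
  [set x | exists l : 'I_n.+1 -> R,
     (forall i, 0 <= l i) /\ \sum_i l i = 1 /\ l k = 0 /\ x = \sum_i l i *: w i].

Definition circumscribed (w : simplex) (K : set pt) : Prop :=
  K `<=` conv_hull w /\ forall k, exists x, K x /\ facet w k x.

End Defs.

Definition hadamard_number (m : nat) : Prop :=
  exists H : 'M[rat]_m, (forall i j, H i j = 1 \/ H i j = -1) /\
    H \in unitmx /\ invmx H = (m%:R)^-1 *: H^T.

From mathcomp Require Import all_boot all_order all_algebra.
From mathcomp Require Import boolp classical_sets reals.
From mathcomp Require Import ring lra.
Import Order.TTheory GRing.Theory Num.Theory.
Local Open Scope ring_scope.
Local Open Scope classical_set_scope.
Set Implicit Arguments. Unset Strict Implicit. Unset Printing Implicit Defensive.

(* The lower bound is general.  For a nondegenerate simplex S in Q_n the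
   barycentric coordinates lam_k are affine; write x_j * c_jk for their
   linear parts.  Since sum_k c_jk = 0 and sum_k c_jk (v_k)_j = 1 with
   (v_k)_j in [0, 1], the negative c_jk sum to at most -1 for every j.  If
   t + sigma S covers Q_n, evaluating lam_k at the vertex of Q_n minimizing it
   and summing over k gives sigma >= n; this bounds xi_n, xi(S), alpha(S).

   For the upper bound we normalize an Hadamard matrix h of order n + 1 (first
   column all ones) and take the vertices v_k = (1 - h_k(j+1)) / 2.  Its
   barycentric coordinates are explicit; on Q_n they are >= (1 - n) / (n + 1),
   which says that Q_n lies in nS, with equality on the k-th facet exactly at
   the vertex (1 + h_k(j+1)) / 2 of Q_n. *)

Section Convexity.
Variables (R : realType) (n : nat).
Local Notation pt := 'rV[R]_n.
Implicit Types (v : simplex R n) (l : 'I_n.+1 -> R).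

Lemma vertex_in_conv v k : conv_hull v (v k).
Proof.
exists (fun i => (i == k)%:R); split; first by move=> i; rewrite ler0n.
split; first by rewrite (bigD1 k) //= eqxx big1 ?addr0 // => i /negbTE ->.
by rewrite (bigD1 k) //= eqxx scale1r big1 ?addr0 // => i /negbTE ->; rewrite scale0r.
Qed.

Lemma cube_vertex_in_cube (z : pt) : cube_vertex z -> cube z.
Proof. by move=> zv j; case: (zv j) => ->; rewrite ?lexx ?ler01. Qed.

Lemma conv_sub_cube v : (forall k, cube (v k)) -> conv_hull v `<=` @cube R n.
Proof.
move=> vc z [l [l0 [l1 ->]]] j; rewrite summxE; apply/andP; split.
  by apply: sumr_ge0 => k _; rewrite mxE mulr_ge0 //; case/andP: (vc k j).
rewrite -l1; apply: ler_sum => k _; rewrite mxE -[X in _ <= X]mulr1.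
by rewrite ler_wpM2l //; case/andP: (vc k j).
Qed.

Lemma homothety_vertices_comb v s l : \sum_i l i = 1 ->
  \sum_i l i *: homothety_vertices v s i =
  centroid v + s *: (\sum_i l i *: v i - centroid v).
Proof.
move=> l1; rewrite /homothety_vertices; move: (centroid v) => c.
rewrite (eq_bigr (fun i => l i *: c + s *: (l i *: v i) - s *: (l i *: c))); last first.
  by move=> i _; rewrite scalerDr !scalerA scalerBr addrA (mulrC s).
by rewrite sumrB big_split /= -!scaler_sumr -!scaler_suml l1 !scale1r scalerBr addrA.
Qed.

Lemma homothety_conv v s : homothety v s = conv_hull (homothety_vertices v s).
Proof.
apply/seteqP; split=> x.
  case=> y [l [l0 [l1 ->]]] <-; exists l; split=> //; split=> //.
  by rewrite homothety_vertices_comb.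
case=> l [l0 [l1 ->]]; rewrite homothety_vertices_comb //.
by exists (\sum_i l i *: v i) => //; exists l.
Qed.

Lemma nondeg_of_dual v (a : 'I_n.+1 -> R) (b : 'I_n.+1 -> 'I_n -> R) :
  (forall i k, a k + \sum_j b k j * v i ord0 j = (i == k)%:R) ->
  nondeg_simplex v.
Proof.
move=> dual l l0 lv k.
have vj j : \sum_i l i * v i ord0 j = 0.
  transitivity ((\sum_i l i *: v i) ord0 j); last by rewrite lv mxE.
  by rewrite summxE; apply: eq_bigr => i _; rewrite mxE.
transitivity (\sum_i l i * (a k + \sum_j b k j * v i ord0 j)).
  rewrite (bigD1 k) //= dual eqxx mulr1 big1 ?addr0 // => i /negbTE ik.
  by rewrite dual ik mulr0.
under eq_bigr => i _ do rewrite mulrDr mulr_sumr.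
rewrite big_split /= -mulr_suml l0 mul0r add0r exchange_big /= big1 // => j _.
by under eq_bigr do rewrite mulrCA; rewrite -mulr_sumr vj mulr0.
Qed.

Lemma axial_segment_le1 (K : set pt) i d :
  K `<=` @cube R n -> axial_segment K i d -> d <= 1.
Proof.
move=> Kc [d0 [x xK]].
have /(_ i) := Kc _ (xK 0 (ltac:(by rewrite lexx ler01))).
have /(_ i) := Kc _ (xK 1 (ltac:(by rewrite lexx ler01))).
rewrite !mxE !eqxx /= mul0r mul1r mulr1 mul0r addr0.
by case/andP => _ ? /andP [? _]; lra.
Qed.

End Convexity.

Section Barycentric.
Variables (R : realType) (n : nat).
Local Notation pt := 'rV[R]_n.
Local Notation m := (n.+1%:R : R).

Definition barycentric (v : simplex R n) (lam : pt -> 'I_n.+1 -> R) : Prop :=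
  forall z, \sum_k lam z k = 1 /\ \sum_k lam z k *: v k = z.

Variables (v : simplex R n) (lam : pt -> 'I_n.+1 -> R).
Hypotheses (nd : nondeg_simplex v) (bv : barycentric v lam).
Local Notation c := (centroid v).

Lemma lam_sum z : \sum_k lam z k = 1. Proof. exact: (bv z).1. Qed.

Lemma lam_comb z : \sum_k lam z k *: v k = z. Proof. exact: (bv z).2. Qed.

Lemma lam_eq z (mu : 'I_n.+1 -> R) :
  \sum_k mu k = 1 -> \sum_k mu k *: v k = z -> forall k, lam z k = mu k.
Proof.
move=> mu1 muz k; apply/eqP; rewrite -subr_eq0; apply/eqP.
apply: (nd (l := fun k => lam z k - mu k)); first by rewrite sumrB lam_sum mu1 subrr.
by under eq_bigr do rewrite scalerBl; rewrite sumrB lam_comb muz subrr.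
Qed.

(* The coefficient of the coordinate x_j in the affine function lam _ k. *)
Definition bary_coef (j : 'I_n) (k : 'I_n.+1) : R := lam (unit_vec R j) k - lam 0 k.

Definition bary_lin (z : pt) (k : 'I_n.+1) : R := \sum_j z ord0 j * bary_coef j k.

Lemma bary_coef_sum j : \sum_k bary_coef j k = 0.
Proof. by rewrite sumrB !lam_sum subrr. Qed.

Lemma bary_coef_comb j : \sum_k bary_coef j k *: v k = unit_vec R j.
Proof. by under eq_bigr do rewrite scalerBl; rewrite sumrB !lam_comb subr0. Qed.

Lemma bary_lin_sum z : \sum_k bary_lin z k = 0.
Proof.
rewrite exchange_big big1 // => j _.
by rewrite -mulr_sumr bary_coef_sum mulr0.
Qed.

Lemma bary_linD p q k : bary_lin (p + q) k = bary_lin p k + bary_lin q k.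
Proof. by rewrite -big_split; apply: eq_bigr => j _; rewrite mxE mulrDl. Qed.

Lemma lam_affine z k : lam z k = lam 0 k + bary_lin z k.
Proof.
apply: (lam_eq (mu := fun k => lam 0 k + bary_lin z k)) => {k}.
  rewrite big_split /= lam_sum exchange_big /= big1 ?addr0 // => j _.
  by rewrite -mulr_sumr bary_coef_sum mulr0.
rewrite (eq_bigr (fun k => lam 0 k *: v k +
                  \sum_j z ord0 j *: (bary_coef j k *: v k))); last first.
  move=> k _; rewrite scalerDl scaler_suml; congr (_ + _).
  by apply: eq_bigr => j _; rewrite scalerA.
rewrite big_split /= lam_comb add0r exchange_big /= [RHS]row_sum_delta.
by apply: eq_bigr => j _; rewrite -scaler_sumr bary_coef_comb.
Qed.

Lemma lam_homothety s y k : lam (c + s *: (y - c)) k = m^-1 + s * (lam y k - m^-1).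
Proof.
have m0 : m != 0 by rewrite pnatr_eq0.
have inv_sum : \sum_(k < n.+1) m^-1 = 1.
  by rewrite sumr_const card_ord -[_ *+ _]mulr_natr mulVf.
apply: (lam_eq (mu := fun k => m^-1 + s * (lam y k - m^-1))) => {k}.
  by rewrite big_split /= -mulr_sumr sumrB lam_sum inv_sum subrr mulr0 addr0.
under eq_bigr do rewrite scalerDl -scalerA scalerBl.
by rewrite big_split /= -!scaler_sumr sumrB lam_comb -scaler_sumr.
Qed.

Lemma lam_ge0 z : conv_hull v z -> forall k, 0 <= lam z k.
Proof. by case=> l [l0 [l1 ->]] k; rewrite (lam_eq l1 erefl). Qed.

Lemma conv_of_lam_ge0 z : (forall k, 0 <= lam z k) -> conv_hull v z.
Proof. by move=> lz; exists (lam z); rewrite lam_sum lam_comb. Qed.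

Lemma homothety_vertices_coords s x : s != 0 ->
  \sum_i s^-1 * (lam x i - (1 - s) / m) = 1 /\
  \sum_i (s^-1 * (lam x i - (1 - s) / m)) *: homothety_vertices v s i = x.
Proof.
move=> s0; set y := c + s^-1 *: (x - c).
have ly i : s^-1 * (lam x i - (1 - s) / m) = lam y i.
  by rewrite lam_homothety; field; rewrite s0 andbT addrC natr1 pnatr_eq0.
split; first by under eq_bigr do rewrite ly; rewrite lam_sum.
under eq_bigr do rewrite ly.
rewrite homothety_vertices_comb ?lam_sum // lam_comb.
by rewrite /y addrAC subrr add0r scalerA mulfV // scale1r addrC subrK.
Qed.

Lemma homothety_vertices_conv s x : 0 < s ->
  (forall i, (1 - s) / m <= lam x i) -> conv_hull (homothety_vertices v s) x.
Proof.
move=> s0 xge; have [sum1 comb] := homothety_vertices_coords x (lt0r_neq0 s0).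
exists (fun i => s^-1 * (lam x i - (1 - s) / m)); do !split => //.
by move=> i; rewrite mulr_ge0 // ?invr_ge0 ?subr_ge0 ?xge // ltW.
Qed.

Lemma homothety_vertices_facet s x k : 0 < s ->
  (forall i, (1 - s) / m <= lam x i) -> lam x k = (1 - s) / m ->
  facet (homothety_vertices v s) k x.
Proof.
move=> s0 xge xk; have [sum1 comb] := homothety_vertices_coords x (lt0r_neq0 s0).
exists (fun i => s^-1 * (lam x i - (1 - s) / m)); do !split => //.
- by move=> i; rewrite mulr_ge0 // ?invr_ge0 ?subr_ge0 ?xge // ltW.
- by rewrite xk subrr mulr0.
Qed.

Lemma lam_on_facet s x k :
  facet (homothety_vertices v s) k x -> lam x k = (1 - s) / m.
Proof.
case=> l [_ [l1 [lk ->]]].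
by rewrite homothety_vertices_comb // lam_homothety (lam_eq l1 erefl) lk; ring.
Qed.

End Barycentric.

Section BarycentricExistence.
Variables (R : realType) (n : nat).
Local Notation pt := 'rV[R]_n.
Variable v : simplex R n.

(* the homogeneous coordinates (1, z) of a point z, with 1 in column 0 *)
Definition homogeneous (z : pt) : 'rV[R]_n.+1 :=
  \row_c (if unlift ord0 c is Some j then z ord0 j else 1).

Lemma homogeneous_combP (u : 'I_n.+1 -> R) (a : R) (z : pt) :
  \sum_k u k *: homogeneous (v k) = a *: homogeneous z <->
  \sum_k u k = a /\ \sum_k u k *: v k = a *: z.
Proof.
have entry c : (\sum_k u k *: homogeneous (v k)) ord0 c =
    if unlift ord0 c is Some j then (\sum_k u k *: v k) ord0 j else \sum_k u k.
  rewrite summxE; case: (unliftP ord0 c) => [j|] E; subst c; rewrite ?liftK ?unlift_none.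
    by rewrite summxE; apply: eq_bigr => k _; rewrite !mxE liftK.
  by apply: eq_bigr => k _; rewrite !mxE unlift_none mulr1.
split=> [/rowP e | [u1 uz]].
  split; first by have := e ord0; rewrite entry !mxE unlift_none mulr1.
  by apply/rowP => j; have := e (lift ord0 j); rewrite entry !mxE liftK.
apply/rowP => c; rewrite entry !mxE.
by case: (unliftP ord0 c) => [j _|_]; rewrite ?u1 ?mulr1 // uz mxE.
Qed.

Definition vertex_matrix : 'M[R]_n.+1 := \matrix_k homogeneous (v k).

Lemma vertex_matrix_mul (u : 'rV[R]_n.+1) :
  u *m vertex_matrix = \sum_k u ord0 k *: homogeneous (v k).
Proof. by rewrite mulmx_sum_row; under eq_bigr do rewrite rowK. Qed.

(* Affinely independent vertices give an invertible vertex matrix, so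
   barycentric coordinates exist: lam z = (1, z) * vertex_matrix^-1. *)
Lemma barycentric_exists :
  nondeg_simplex v -> exists lam, barycentric v lam.
Proof.
move=> nd; have unit : vertex_matrix \in unitmx.
  rewrite -row_free_unit; apply: inj_row_free => u.
  rewrite vertex_matrix_mul -[X in _ = X -> _](scale0r (homogeneous 0)).
  case/homogeneous_combP; rewrite scale0r => u0 uv.
  by apply/rowP => k; rewrite mxE; exact: nd u0 uv k.
exists (fun z k => (homogeneous z *m invmx vertex_matrix) ord0 k) => z.
have := mulmxKV unit (homogeneous z).
rewrite vertex_matrix_mul -[X in _ = X]scale1r.
by case/homogeneous_combP; rewrite scale1r.
Qed.

End BarycentricExistence.

Section LowerBound.
Variables (R : realType) (n : nat).
Local Notation pt := 'rV[R]_n.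
Local Notation m := (n.+1%:R : R).
Variables (v : simplex R n) (lam : pt -> 'I_n.+1 -> R).
Hypotheses (nd : nondeg_simplex v) (bv : barycentric v lam).
Hypothesis v_cube : conv_hull v `<=` @cube R n.

(* the vertex of Q_n minimizing the k-th barycentric coordinate *)
Definition min_vertex (k : 'I_n.+1) : pt :=
  \row_j (if bary_coef lam j k < 0 then 1 else 0).

Lemma min_vertex_cube k : cube (min_vertex k).
Proof. by move=> j; rewrite mxE; case: ifP; rewrite ?lexx ?ler01. Qed.

(* Since sum_k bary_coef j k = 0 and sum_k bary_coef j k * (v k)_j = 1 with
   (v k)_j in [0, 1], the negative coefficients of x_j sum to at most -1. *)
Lemma neg_coef_sum j : \sum_k min_vertex k ord0 j * bary_coef lam j k <= -1.
Proof.
have comb1 : \sum_k bary_coef lam j k * v k ord0 j = 1.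
  transitivity ((\sum_k bary_coef lam j k *: v k) ord0 j).
    by rewrite summxE; apply: eq_bigr => k _; rewrite mxE.
  by rewrite (bary_coef_comb bv j) mxE !eqxx.
have : \sum_k bary_coef lam j k * v k ord0 j <=
        \sum_k (bary_coef lam j k - min_vertex k ord0 j * bary_coef lam j k).
  apply: ler_sum => k _; rewrite mxE.
  have /andP [vk0 vk1] := v_cube (vertex_in_conv v k) j.
  case: ltP => neg; first by rewrite mul1r subrr mulr_le0_ge0 // ltW.
  by rewrite mul0r subr0 -[X in _ <= X]mulr1 ler_wpM2l.
by rewrite comb1 sumrB (bary_coef_sum bv) sub0r lerNr.
Qed.

Lemma min_vertex_sum : \sum_k bary_lin lam (min_vertex k) k <= - n%:R.
Proof.
rewrite exchange_big /=; apply: le_trans (ler_sum _ (fun j _ => neg_coef_sum j)) _.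
by rewrite sumr_const card_ord -mulNrn.
Qed.

Lemma lam_translate_homothety s t y k : 0 < s -> homothety v s y ->
  (1 - s) / m + bary_lin lam t k <= lam (t + y) k.
Proof.
move=> s0 [z z_in <-].
rewrite (lam_affine nd bv) bary_linD addrCA -(lam_affine nd bv) (lam_homothety nd bv).
rewrite [X in X <= _]addrC lerD2l -subr_ge0 (_ : _ - _ = s * lam z k).
  exact: mulr_ge0 (ltW s0) (lam_ge0 nd bv z_in k).
by field; rewrite addrC natr1 pnatr_eq0.
Qed.

(* If a translate of sigma S covers Q_n, then s >= n: sum the previous bound
   over k at the minimizing vertices. *)
Lemma cover_ratio_ge s t : 0 < s ->
  @cube R n `<=` [set t + y | y in homothety v s] -> n%:R <= s.
Proof.
move=> s0 cover.
have bound k : (1 - s) / m + bary_lin lam t k <= lam 0 k + bary_lin lam (min_vertex k) k.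
  have [y y_in <-] := cover _ (min_vertex_cube k).
  by rewrite -(lam_affine nd bv); exact: lam_translate_homothety.
have : \sum_k ((1 - s) / m + bary_lin lam t k) <=
       \sum_k (lam 0 k + bary_lin lam (min_vertex k) k).
  by apply: ler_sum => k _; exact: bound.
rewrite !big_split /= (bary_lin_sum bv) (lam_sum bv) sumr_const card_ord.
rewrite -[_ *+ _]mulr_natr divfK ?pnatr_eq0 // addr0 => total.
have := min_vertex_sum; lra.
Qed.

End LowerBound.

Lemma translate_cover_ratio_ge (R : realType) n (v : simplex R n) s t :
  nondeg_simplex v -> conv_hull v `<=` @cube R n -> 0 < s ->
  @cube R n `<=` [set t + y | y in homothety v s] -> n%:R <= s.
Proof. by move=> nd v_cube; have [lam bv] := barycentric_exists nd; exact: cover_ratio_ge. Qed.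

Lemma extremal_ratios (R : realType) n (v : simplex R n) :
  (0 < n)%N -> nondeg_simplex v -> conv_hull v `<=` @cube R n ->
  @cube R n `<=` homothety v n%:R ->
  xin_eq (R := R) n n%:R /\ xi_eq v n%:R /\ alpha_eq v n%:R.
Proof.
move=> n0 nd v_cube cover; have n1 : 1 <= n%:R :> R by rewrite ler1n.
have translate0 (w : simplex R n) s : @cube R n `<=` homothety w s ->
    @cube R n `<=` [set 0 + y | y in homothety w s].
  by move=> w_cover x /w_cover x_in; exists x; rewrite ?add0r.
have xi_ge (w : simplex R n) s : nondeg_simplex w -> conv_hull w `<=` @cube R n ->
    1 <= s /\ @cube R n `<=` homothety w s -> n%:R <= s.
  move=> ndw w_cube [s1 /translate0 w_cover].
  by apply: translate_cover_ratio_ge w_cover => //; lra.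
have xi : xi_eq v n%:R by split=> [//|s s_in]; exact: xi_ge _ _ nd v_cube s_in.
split.
  split=> [|s [w [ndw [w_cube [xiw _]]]]]; first by exists v.
  exact: xi_ge _ _ ndw w_cube xiw.
split=> //; split; first by split; [rewrite ltr0n | exists 0; exact: translate0].
by move=> s [s0 [t t_cover]]; exact: translate_cover_ratio_ge t_cover.
Qed.

Lemma hadamard_orthogonal m (H : 'M[rat]_m.+1) :
  H \in unitmx -> invmx H = m.+1%:R^-1 *: H^T ->
  H *m H^T = m.+1%:R%:M /\ H^T *m H = m.+1%:R%:M.
Proof.
move=> unit inv; have m0 : (m.+1%:R : rat) != 0 by rewrite pnatr_eq0.
split; apply: (scalerI (invr_neq0 m0)); rewrite scale_scalar_mx mulVf //.
  by rewrite scalemxAr -inv mulmxV.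
by rewrite scalemxAl -inv mulVmx.
Qed.

Definition normal_hadamard (F : pzRingType) n (h : 'I_n.+1 -> 'I_n.+1 -> F) : Prop :=
  [/\ forall k a, h k a = 1 \/ h k a = -1,
      forall k, h k ord0 = 1,
      forall k i, \sum_a h k a * h i a = (k == i)%:R * n.+1%:R &
      forall a b, \sum_k h k a * h k b = (a == b)%:R * n.+1%:R].

(* Multiplying each row by its first entry normalizes a matrix with entries
   +-1 and orthogonal rows and columns so that its first column is all ones. *)
Lemma hadamard_normalize (F : comRingType) n (G : 'M[F]_n.+1) :
  (forall k a, G k a = 1 \/ G k a = -1) ->
  G *m G^T = n.+1%:R%:M -> G^T *m G = n.+1%:R%:M ->
  exists h : 'I_n.+1 -> 'I_n.+1 -> F, normal_hadamard h.
Proof.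
move=> pm rows cols.
have sq k a : G k a * G k a = 1 by case: (pm k a) => ->; rewrite ?mulrNN mulr1.
have scalarE (M : 'M[F]_n.+1) i j : M = n.+1%:R%:M -> M i j = (i == j)%:R * n.+1%:R.
  by move=> ->; rewrite mxE mulr_natl.
exists (fun k a => G k a * G k ord0); split=> [k a|k|k i|a b].
- by case: (pm k a) => ->; case: (pm k ord0) => ->; [left|right|right|left]; ring.
- exact: sq.
- transitivity (G k ord0 * G i ord0 * (G *m G^T) k i).
    by rewrite !mxE mulr_sumr; apply: eq_bigr => a _; rewrite mxE; ring.
  rewrite (scalarE _ _ _ rows); case: eqP => [->|_]; first by rewrite sq mul1r.
  by rewrite !mul0r mulr0.
- transitivity ((G^T *m G) a b); last exact: scalarE.
  by rewrite mxE; apply: eq_bigr => k _; rewrite mxE mulrACA sq mulr1.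
Qed.

Lemma hadamard_normal_form (R : realType) n : hadamard_number n.+1 ->
  exists h : 'I_n.+1 -> 'I_n.+1 -> R, normal_hadamard h.
Proof.
case=> H [pm [unit inv]]; have [rows cols] := hadamard_orthogonal unit inv.
apply: (hadamard_normalize (G := map_mx (@ratr R) H)).
- by move=> k a; rewrite mxE; case: (pm k a) => ->; rewrite ?rmorphN rmorph1; [left|right].
- by rewrite map_trmx -map_mxM rows map_scalar_mx rmorph_nat.
- by rewrite map_trmx -map_mxM cols map_scalar_mx rmorph_nat.
Qed.

Section HadamardSimplex.
Variables (R : realType) (n : nat).
Local Notation pt := 'rV[R]_n.
Local Notation m := (n.+1%:R : R).
Variable h : 'I_n.+1 -> 'I_n.+1 -> R.
Hypothesis had : normal_hadamard h.

Local Notation hh k j := (h k (lift ord0 j)).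

Lemma hh_pm k j : hh k j = 1 \/ hh k j = -1.
Proof. by case: had. Qed.

Lemma hh_col_sum j : \sum_k hh k j = 0.
Proof.
case: had => _ first_col _ cols; have := cols (lift ord0 j) ord0.
rewrite eq_sym (negbTE (neq_lift _ _)) mul0r.
by under eq_bigr do rewrite first_col mulr1.
Qed.

Lemma hh_row_dot k i : \sum_j hh k j * hh i j = (k == i)%:R * m - 1.
Proof.
case: had => _ first_col rows _.
by rewrite -rows big_ord_recl !first_col mulr1 (addrC 1) addrK.
Qed.

Lemma hh_col_dot j j' : \sum_k hh k j * hh k j' = (j == j')%:R * m.
Proof. by case: had => _ _ _ cols; rewrite cols (inj_eq (@lift_inj _ ord0)). Qed.

Definition hv : simplex R n := fun k => \row_j ((1 - hh k j) / 2%:R).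

Definition hlam (z : pt) (k : 'I_n.+1) : R :=
  m^-1 * (1 + \sum_j hh k j * (1 - 2%:R * z ord0 j)).

Lemma hv_entry k j : hv k ord0 j = (1 - hh k j) / 2%:R.
Proof. by rewrite mxE. Qed.

Lemma hlam_affine z k :
  hlam z k = m^-1 * (1 + \sum_j hh k j) + \sum_j (- (2%:R * m^-1 * hh k j)) * z ord0 j.
Proof.
rewrite /hlam !mulrDr -addrA; congr (_ + _).
by rewrite !mulr_sumr -big_split; apply: eq_bigr => j _ /=; ring.
Qed.

(* At the vertices it takes the values [i == k], by orthogonality of rows. *)
Lemma hlam_vertex i k : hlam (hv i) k = (i == k)%:R.
Proof.
have coord j : 1 - 2%:R * hv i ord0 j = hh i j by rewrite hv_entry; field.
rewrite /hlam; under eq_bigr do rewrite coord.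
by rewrite hh_row_dot addrC subrK mulrCA mulVf ?pnatr_eq0 // mulr1 eq_sym.
Qed.

Lemma hv_nondeg : nondeg_simplex hv.
Proof.
apply: (nondeg_of_dual (a := fun k => m^-1 * (1 + \sum_j hh k j))
                       (b := fun k j => - (2%:R * m^-1 * hh k j))) => i k.
by rewrite -hlam_affine hlam_vertex.
Qed.

(* hlam reproduces the coordinates: combining the identities below with
   v_k = (1 - h_k(j+1)) / 2 gives barycentric coordinates of S. *)
Lemma hlam_dot z j : \sum_k hlam z k * hh k j = 1 - 2%:R * z ord0 j.
Proof.
rewrite (eq_bigr (fun k => m^-1 *
    (hh k j + \sum_i (1 - 2%:R * z ord0 i) * (hh k i * hh k j)))); last first.
  move=> k _; rewrite /hlam -mulrA mulrDl mul1r mulr_suml; congr (_ * (_ + _)).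
  by apply: eq_bigr => i _; ring.
rewrite -mulr_sumr big_split /= hh_col_sum add0r exchange_big /=.
rewrite (eq_bigr (fun i => (1 - 2%:R * z ord0 i) * ((i == j)%:R * m))); last first.
  by move=> i _; rewrite -mulr_sumr hh_col_dot.
rewrite (bigD1 j) //= eqxx big1 ?addr0; last by move=> i /negbTE ->; rewrite mul0r mulr0.
by rewrite mul1r mulrCA mulVf ?pnatr_eq0 // mulr1.
Qed.

Lemma hlam_sum z : \sum_k hlam z k = 1.
Proof.
rewrite /hlam -mulr_sumr big_split /= sumr_const card_ord exchange_big /=.
rewrite big1 ?addr0; first by rewrite mulVf // pnatr_eq0.
by move=> j _; rewrite -mulr_suml hh_col_sum mul0r.
Qed.

Lemma hlam_bary : barycentric hv hlam.
Proof.
move=> z; split; first exact: hlam_sum.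
apply/rowP => j; rewrite summxE.
rewrite (eq_bigr (fun k => 2%:R^-1 * (hlam z k - hlam z k * hh k j))); last first.
  by move=> k _; rewrite !mxE; ring.
by rewrite -mulr_sumr sumrB hlam_dot hlam_sum; field.
Qed.

Lemma hv_vertex k : cube_vertex (hv k).
Proof. by move=> j; rewrite hv_entry; case: (hh_pm k j) => ->; [left|right]; field. Qed.

Lemma hv_cube : conv_hull hv `<=` @cube R n.
Proof. by apply: conv_sub_cube => k; apply: cube_vertex_in_cube; exact: hv_vertex. Qed.

Lemma hv_dist i k : i != k -> dist2 (hv i) (hv k) = m / 2%:R.
Proof.
move=> ik; rewrite /dist2.
rewrite (eq_bigr (fun j => 2%:R^-1 * (1 - hh i j * hh k j))); last first.
  move=> j _; rewrite !hv_entry expr2.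
  by case: (hh_pm i j) => ->; case: (hh_pm k j) => ->; field.
rewrite -mulr_sumr sumrB sumr_const card_ord hh_row_dot (negbTE ik) mul0r sub0r opprK.
by rewrite natr1 mulrC.
Qed.

Lemma hh_term_ge (z : pt) k j : cube z -> -1 <= hh k j * (1 - 2%:R * z ord0 j).
Proof.
move=> /(_ j) /andP [z0 z1]; move: (z ord0 j) z0 z1 => x x0 x1.
by case: (hh_pm k j) => ->; rewrite ?mul1r ?mulN1r; lra.
Qed.

Lemma hlam_cube (z : pt) k : cube z -> (1 - n%:R) / m <= hlam z k.
Proof.
move=> z_cube; rewrite /hlam [X in _ <= X]mulrC ler_wpM2r ?invr_ge0 ?ler0n //.
have : \sum_(j < n) (-1 : R) <= \sum_j hh k j * (1 - 2%:R * z ord0 j).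
  by apply: ler_sum => j _; exact: hh_term_ge.
rewrite sumr_const card_ord mulNrn; lra.
Qed.

(* The vertex of Q_n where the k-th coordinate attains this minimum. *)
Definition opposite_vertex (k : 'I_n.+1) : pt := \row_j ((1 + hh k j) / 2%:R).

Lemma opposite_vertex_cube_vertex k : cube_vertex (opposite_vertex k).
Proof. by move=> j; rewrite mxE; case: (hh_pm k j) => ->; [right|left]; field. Qed.

Lemma hlam_opposite_vertex k : hlam (opposite_vertex k) k = (1 - n%:R) / m.
Proof.
rewrite /hlam (eq_bigr (fun _ => -1)); last first.
  by move=> j _; rewrite mxE; case: (hh_pm k j) => ->; field.
by rewrite sumr_const card_ord mulNrn mulrC.
Qed.

(* It is the only vertex of Q_n where the minimum is attained: all the terms
   in hh_term_ge must then equal -1. *)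
Lemma opposite_vertex_unique (z : pt) k : cube_vertex z ->
  hlam z k = (1 - n%:R) / m -> z = opposite_vertex k.
Proof.
move=> z_vert z_min; have z_cube := cube_vertex_in_cube z_vert.
have m0 : m != 0 by rewrite pnatr_eq0.
have sum_terms : \sum_j hh k j * (1 - 2%:R * z ord0 j) = - n%:R.
  by move: z_min; rewrite /hlam mulrC => /(mulIf (invr_neq0 m0)); lra.
have terms0 : \sum_j (hh k j * (1 - 2%:R * z ord0 j) + 1) = 0.
  by rewrite big_split /= sum_terms sumr_const card_ord -[_ *+ _]mulr_natr mul1r addNr.
have term_ge0 j : 0 <= hh k j * (1 - 2%:R * z ord0 j) + 1.
  by have := hh_term_ge k j z_cube; lra.
apply/rowP => j; rewrite mxE.
have := psumr_eq0P (fun j _ => term_ge0 j) terms0 (i := j) isT.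
by case: (z_vert j) => ->; case: (hh_pm k j) => -> term0; first [field | lra].
Qed.

(* A segment of length 1 parallel to the i-th axis inside S: it joins two
   points whose other coordinates are all 1/2. *)
Definition axial_base (i : 'I_n) : pt := \row_j (if j == i then 0 else 2%:R^-1).

Lemma hlam_axial_segment i t k :
  0 <= t <= 1 -> 0 <= hlam (axial_base i + (t * 1) *: unit_vec R i) k.
Proof.
move=> /andP [t0 t1].
rewrite /hlam mulr_ge0 ?invr_ge0 ?ler0n // (bigD1 i) //= big1; last first.
  move=> j /negbTE ji; rewrite !mxE ji /= mulr0 addr0.
  by rewrite (_ : 1 - 2%:R * 2%:R^-1 = 0) ?mulr0 //; field.
rewrite !mxE !eqxx /= !mulr1 add0r addr0.
by case: (hh_pm k i) => ->; lra.
Qed.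

Hypothesis n_gt0 : (0 < n)%N.

(* Q_n lies in nS, since its points have all coordinates >= (1 - n) / m. *)
Lemma hv_cover : @cube R n `<=` homothety hv n%:R.
Proof.
move=> x x_cube; rewrite homothety_conv.
apply: (homothety_vertices_conv hv_nondeg hlam_bary); first by rewrite ltr0n.
by move=> i; exact: hlam_cube.
Qed.

Lemma opposite_vertex_facet k :
  facet (homothety_vertices hv n%:R) k (opposite_vertex k).
Proof.
have vk_cube := cube_vertex_in_cube (opposite_vertex_cube_vertex k).
apply: (homothety_vertices_facet hv_nondeg hlam_bary); first by rewrite ltr0n.
  by move=> i; exact: hlam_cube i vk_cube.
exact: hlam_opposite_vertex.
Qed.

Lemma hv_circumscribed : circumscribed (homothety_vertices hv n%:R) (@cube R n).
Proof.
split; first by move=> x /hv_cover; rewrite homothety_conv.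
move=> k; exists (opposite_vertex k); split; last exact: opposite_vertex_facet.
exact/cube_vertex_in_cube/opposite_vertex_cube_vertex.
Qed.

Lemma hv_facet_vertex k : exists! q : pt,
  cube_vertex q /\ facet (homothety_vertices hv n%:R) k q.
Proof.
exists (opposite_vertex k); split.
  by split; [exact: opposite_vertex_cube_vertex | exact: opposite_vertex_facet].
move=> q [q_vert q_facet]; apply/esym/opposite_vertex_unique => //.
exact: (lam_on_facet hv_nondeg hlam_bary q_facet).
Qed.

Lemma hv_axial_diam i : axial_diam_eq (conv_hull hv) i 1.
Proof.
split; last by move=> d; exact: axial_segment_le1 hv_cube.
split; first exact: ler01.
exists (axial_base i) => t t01; apply: (conv_of_lam_ge0 hlam_bary) => k.
exact: hlam_axial_segment.
Qed.

End HadamardSimplex.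

Unset Implicit Arguments.
Set Strict Implicit.
Theorem theorem2p1 (R : realType) (n : nat) :
  (0 < n)%N -> hadamard_number n.+1 ->
  exists v : simplex R n,
    nondeg_simplex v /\ regular_simplex v /\ conv_hull v `<=` @cube R n /\
    (* (1) *) (forall i, cube_vertex (v i)) /\
    (* (2) *) (xin_eq (R := R) n n%:R /\ xi_eq v n%:R /\ alpha_eq v n%:R) /\
    (* (3) *) (forall i, axial_diam_eq (conv_hull v) i 1) /\
    (* (4) *) (circumscribed (homothety_vertices v n%:R) (@cube R n) /\
               forall k, exists! q : 'rV[R]_n,
                 cube_vertex q /\ facet (homothety_vertices v n%:R) k q).
Proof.
move=> n_gt0 /(hadamard_normal_form R) [h had].
have nd := hv_nondeg had; have v_cube := hv_cube had.
exists (hv h); split=> //; split.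
  by move=> i j k l ij kl; rewrite !(hv_dist had).
split=> //; split; first exact: hv_vertex.
split; first exact: extremal_ratios (hv_cover had n_gt0).
split; first exact: hv_axial_diam.
split; first exact: hv_circumscribed.
exact: hv_facet_vertex.
Qed.
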